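(* Consider the real ODE system $$\frac{dp}{dt}=p\,(pR(v_c)-1),\qquad \frac{dv_c}{dt}=-\frac{p}{4}(1+v_c^2),\qquad R(v)=\frac12\left(\frac1v-v\right),$$ and let $\Omega=\{(v,p):v>0,\ -v^{-1}\le p\le v\}$. Then for every initial datum $(v_c(0),p(0))\in\Omega$ the solution satisfies $(v_c(t),p(t))\in\Omega$ for all $t>0$, and $v_c(t)$ cannot reach $0$ or $\infty$ at any finite time; hence the solution exists for all $0<t<\infty$.
   Context: This system is the form, with dissipation coefficient normalized to $\nu=1$, of the pole-dynamics ODEs for the generalized Constantin–Lax–Majda equation with $a=1/2$, $\sigma=0$, written in the variable $p=\omega_{-2,i}/(v_c(1-v_c^2))$. *)

From Stdlib Require Import Reals.
From Coquelicot Require Import Coquelicot.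
Open Scope R_scope.

Definition Rfun (v : R) : R := (/ v - v) / 2.

Definition Omega (v p : R) : Prop := 0 < v /\ - / v <= p /\ p <= v.

(* (vc, p) solves  dp/dt = p (p R(vc) - 1),  dvc/dt = -(p/4)(1+vc^2)
   on the time interval [0, T) (T possibly +oo): the equations hold for
   0 < t < T and both functions are right-continuous at t = 0. *)
Definition is_solution_on (T : Rbar) (vc p : R -> R) : Prop :=
  (forall t : R, 0 < t -> Rbar_lt t T ->
     is_derive p t (p t * (p t * Rfun (vc t) - 1)) /\
     is_derive vc t (- (p t / 4) * (1 + vc t ^ 2))) /\
  filterlim vc (at_right 0) (locally (vc 0)) /\
  filterlim p (at_right 0) (locally (p 0)).

From Stdlib Require Import Reals Lra Psatz Ranalysis5.
From Coquelicot Require Import Coquelicot.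
Open Scope R_scope.

(* With h(v) = 4v^2/(1+v^2)^2 the weight u = p h(vc) satisfies u' = -u, so
   u = u0 exp(-t), and with G' = 8v^2/(1+v^2)^3 the quantity G(vc) - u/2 is a
   first integral.  A point lies in Omega iff v > 0 and its level lies between
   the values F(v), E(v) of the first integral on the boundary curves p = v and
   p = -1/v, both increasing in v.  As u decays, G(vc) moves monotonically from
   G(v0) towards the fixed level, which moves vc in the direction keeping the
   level admissible.  Conversely G(vc(t)) = K + u0 exp(-t)/2 stays in a compact
   subinterval of (0, pi/2) = G((0, oo)), so inverting G gives the global
   solution in closed form. *)

Definition Gfun (v : R) : R := atan v - v * (1 - v ^ 2) / (1 + v ^ 2) ^ 2.
Definition hfun (v : R) : R := 4 * v ^ 2 / (1 + v ^ 2) ^ 2.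
(* [Ffun v = level v v] and [Efun v = level v (- / v)]. *)
Definition Ffun (v : R) : R := atan v - v / (1 + v ^ 2).
Definition Efun (v : R) : R := atan v + v / (1 + v ^ 2).

Definition level (v p : R) : R := Gfun v - p * hfun v / 2.

Lemma one_plus_sqr_pos (v : R) : 0 < 1 + v ^ 2.
Proof. nra. Qed.

Ltac solve_derive v :=
  pose proof (one_plus_sqr_pos v); auto_derive;
  [repeat split; apply Rgt_not_eq; nra | field; apply Rgt_not_eq; nra].

Lemma is_derive_Gfun (v : R) : is_derive Gfun v (8 * v ^ 2 / (1 + v ^ 2) ^ 3).
Proof. unfold Gfun; solve_derive v. Qed.

Lemma is_derive_hfun (v : R) : is_derive hfun v (8 * v * (1 - v ^ 2) / (1 + v ^ 2) ^ 3).
Proof. unfold hfun; solve_derive v. Qed.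

Lemma is_derive_Ffun (v : R) : is_derive Ffun v (2 * v ^ 2 / (1 + v ^ 2) ^ 2).
Proof. unfold Ffun; solve_derive v. Qed.

Lemma is_derive_Efun (v : R) : is_derive Efun v (2 / (1 + v ^ 2) ^ 2).
Proof. unfold Efun; solve_derive v. Qed.

Lemma continuous_Gfun (v : R) : continuous Gfun v.
Proof. apply (ex_derive_continuous (V := R_NormedModule)); eexists; apply is_derive_Gfun. Qed.

Lemma continuous_hfun (v : R) : continuous hfun v.
Proof. apply (ex_derive_continuous (V := R_NormedModule)); eexists; apply is_derive_hfun. Qed.

Lemma increasing_of_derive_pos (f f' : R -> R) (a b : R) :
  (forall c, is_derive f c (f' c)) -> (forall c, a < c < b -> 0 < f' c) ->
  a < b -> f a < f b.
Proof.
  intros Hd Hpos Hab.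
  destruct (MVT_cor2 f f' a b Hab) as [c [Hmvt Hc]].
  { intros c _; apply is_derive_Reals, Hd. }
  specialize (Hpos c Hc); nra.
Qed.

Lemma increasing_of_derive_pos_except (f f' : R -> R) (z : R) :
  (forall c, is_derive f c (f' c)) -> (forall c, c <> z -> 0 < f' c) ->
  forall a b, a < b -> f a < f b.
Proof.
  intros Hd Hpos a b Hab.
  assert (Hincr : forall x y, x < y -> ~ (x < z < y) -> f x < f y).
  { intros x y Hxy Hz; apply (increasing_of_derive_pos f f'); auto.
    intros c Hc; apply Hpos; intros ->; lra. }
  destruct (Rlt_dec a z), (Rlt_dec z b).
  - apply Rlt_trans with (f z); apply Hincr; lra.
  - apply Hincr; lra.
  - apply Hincr; lra.
  - apply Hincr; lra.
Qed.

Lemma Gfun_lt (x y : R) : x < y -> Gfun x < Gfun y.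
Proof.
  apply (increasing_of_derive_pos_except _ _ 0 is_derive_Gfun).
  intros c Hc; pose proof (one_plus_sqr_pos c).
  apply Rdiv_lt_0_compat; [|apply pow_lt]; nra.
Qed.

Lemma Ffun_lt (x y : R) : x < y -> Ffun x < Ffun y.
Proof.
  apply (increasing_of_derive_pos_except _ _ 0 is_derive_Ffun).
  intros c Hc; pose proof (one_plus_sqr_pos c).
  apply Rdiv_lt_0_compat; [|apply pow_lt]; nra.
Qed.

Lemma Efun_lt (x y : R) : x < y -> Efun x < Efun y.
Proof.
  apply (increasing_of_derive_pos_except _ _ 0 is_derive_Efun).
  intros c _; pose proof (one_plus_sqr_pos c).
  apply Rdiv_lt_0_compat; [|apply pow_lt]; nra.
Qed.

Lemma le_iff_of_strict_increasing (f : R -> R) :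
  (forall x y, x < y -> f x < f y) -> forall x y, f x <= f y <-> x <= y.
Proof.
  intros Hf x y; split; intros Hxy.
  - destruct (Rle_lt_dec x y) as [|Hyx]; auto; apply Hf in Hyx; lra.
  - destruct Hxy as [Hxy| ->]; [apply Hf in Hxy|]; lra.
Qed.

Lemma Gfun_inj (x y : R) : Gfun x = Gfun y -> x = y.
Proof.
  intros Hxy; pose proof (le_iff_of_strict_increasing Gfun Gfun_lt) as Hle.
  apply Rle_antisym; apply Hle; lra.
Qed.

Lemma Gfun_0 : Gfun 0 = 0.
Proof. unfold Gfun; rewrite atan_0; field. Qed.

Lemma Ffun_0 : Ffun 0 = 0.
Proof. unfold Ffun; rewrite atan_0; field. Qed.

Lemma Gfun_pos (v : R) : 0 < v -> 0 < Gfun v.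
Proof. intros Hv; rewrite <- Gfun_0; now apply Gfun_lt. Qed.

Lemma Ffun_pos (v : R) : 0 < v -> 0 < Ffun v.
Proof. intros Hv; rewrite <- Ffun_0; now apply Ffun_lt. Qed.

Lemma pos_of_Gfun_pos (v : R) : 0 < Gfun v -> 0 < v.
Proof.
  intros HG; destruct (Rlt_le_dec 0 v) as [|Hv]; auto.
  destruct Hv as [Hv| ->]; [apply Gfun_lt in Hv|]; rewrite Gfun_0 in *; lra.
Qed.

Lemma Gfun_inv (v : R) : 0 < v -> Gfun (/ v) = PI / 2 - Gfun v.
Proof.
  intros Hv; unfold Gfun; rewrite atan_inv by lra.
  pose proof (one_plus_sqr_pos v); field; split; lra.
Qed.

Lemma Efun_inv (v : R) : 0 < v -> Efun v = PI / 2 - Ffun (/ v).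
Proof.
  intros Hv; unfold Efun, Ffun; rewrite atan_inv by lra.
  pose proof (one_plus_sqr_pos v); field; split; lra.
Qed.

Lemma Gfun_bounds (v : R) : 0 < v -> 0 < Gfun v < PI / 2.
Proof.
  intros Hv; pose proof (Gfun_pos (/ v) (Rinv_0_lt_compat v Hv)).
  rewrite Gfun_inv in * by lra; split; [apply Gfun_pos|]; lra.
Qed.

Lemma level_sub_Ffun (v p : R) :
  level v p - Ffun v = 2 * v ^ 2 * (v - p) / (1 + v ^ 2) ^ 2.
Proof. unfold level, Gfun, Ffun, hfun; pose proof (one_plus_sqr_pos v); field; lra. Qed.

Lemma Efun_sub_level (v p : R) :
  Efun v - level v p = 2 * v * (1 + p * v) / (1 + v ^ 2) ^ 2.
Proof. unfold level, Gfun, Efun, hfun; pose proof (one_plus_sqr_pos v); field; lra. Qed.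

Lemma div_sqr_nonneg_iff (a v : R) : 0 <= a / (1 + v ^ 2) ^ 2 <-> 0 <= a.
Proof.
  pose proof (pow_lt _ 2 (one_plus_sqr_pos v)) as Hd.
  split; intros Ha.
  - replace a with (a / (1 + v ^ 2) ^ 2 * (1 + v ^ 2) ^ 2)
      by (field; pose proof (one_plus_sqr_pos v); lra).
    nra.
  - now apply Rle_mult_inv_pos.
Qed.

Lemma neg_inv_le_iff (v p : R) : 0 < v -> - / v <= p <-> 0 <= 1 + p * v.
Proof.
  intros Hv; split; intros H.
  - apply Rmult_le_compat_r with (r := v) in H; [|lra].
    replace (- / v * v) with (-1) in H by (field; lra); lra.
  - apply Rmult_le_reg_r with v; auto.
    replace (- / v * v) with (-1) by (field; lra); lra.
Qed.

Lemma Omega_iff_level (v p : R) :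
  Omega v p <-> 0 < v /\ Ffun v <= level v p <= Efun v.
Proof.
  pose proof (level_sub_Ffun v p) as HF; pose proof (Efun_sub_level v p) as HE.
  unfold Omega; split; intros [Hv Hp]; split; auto.
  - rewrite neg_inv_le_iff in Hp by auto.
    assert (0 <= level v p - Ffun v) by (rewrite HF, div_sqr_nonneg_iff; nra).
    assert (0 <= Efun v - level v p) by (rewrite HE, div_sqr_nonneg_iff; nra).
    lra.
  - rewrite neg_inv_le_iff by auto.
    assert (0 <= 2 * v ^ 2 * (v - p)) by (rewrite <- div_sqr_nonneg_iff, <- HF; lra).
    assert (0 <= 2 * v * (1 + p * v)) by (rewrite <- div_sqr_nonneg_iff, <- HE; lra).
    split.
    + destruct (Rle_lt_dec 0 (1 + p * v)); auto.
      assert (2 * v * (1 + p * v) < 0) by (apply Rmult_pos_neg; lra); lra.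
    + destruct (Rle_lt_dec p v); auto.
      assert (2 * v ^ 2 * (v - p) < 0) by (apply Rmult_pos_neg; nra); lra.
Qed.

Lemma level_bounds (v p : R) : Omega v p -> 0 < level v p < PI / 2.
Proof.
  intros [Hv [HF HE]]%Omega_iff_level.
  pose proof (Ffun_pos v Hv); pose proof (Ffun_pos (/ v) (Rinv_0_lt_compat v Hv)).
  rewrite Efun_inv in HE by auto; lra.
Qed.

Lemma is_derive_value (f : R -> R) (x l l' : R) :
  l = l' -> is_derive f x l -> is_derive f x l'.
Proof. now intros <-. Qed.

(* Also at [v = 0], where [Rfun 0] is the junk value [/ 0 / 2] but [hfun 0 = 0]. *)
Lemma hfun_mul_Rfun (v : R) : hfun v * Rfun v = 2 * v * (1 - v ^ 2) / (1 + v ^ 2) ^ 2.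
Proof.
  unfold hfun, Rfun; pose proof (one_plus_sqr_pos v).
  destruct (Req_dec v 0) as [->|Hv].
  - unfold Rdiv; simpl; ring.
  - field; lra.
Qed.

Section Along_a_solution.

Variables (vc p : R -> R) (t : R).
Hypothesis Dp : is_derive p t (p t * (p t * Rfun (vc t) - 1)).
Hypothesis Dv : is_derive vc t (- (p t / 4) * (1 + vc t ^ 2)).

Lemma is_derive_weight :
  is_derive (fun s => p s * hfun (vc s)) t (- (p t * hfun (vc t))).
Proof.
  pose proof (is_derive_comp hfun vc t _ _ (is_derive_hfun (vc t)) Dv) as Dh.
  eapply is_derive_value; [|exact (is_derive_mult p _ t _ _ Dp Dh Rmult_comm)].
  unfold plus, mult, scal; simpl; unfold mult; simpl.
  replace (p t * (p t * Rfun (vc t) - 1) * hfun (vc t))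
    with (p t * p t * (hfun (vc t) * Rfun (vc t)) - p t * hfun (vc t)) by ring.
  rewrite hfun_mul_Rfun; pose proof (one_plus_sqr_pos (vc t)); field; lra.
Qed.

Lemma is_derive_level : is_derive (fun s => level (vc s) (p s)) t 0.
Proof.
  pose proof (is_derive_comp Gfun vc t _ _ (is_derive_Gfun (vc t)) Dv) as DG.
  pose proof (is_derive_scal _ t (/ 2) _ is_derive_weight) as Du.
  apply (is_derive_ext (fun s => minus (Gfun (vc s)) (/ 2 * (p s * hfun (vc s))))).
  { intros s; unfold level, minus, plus, opp; simpl; field. }
  eapply is_derive_value; [|exact (is_derive_minus _ _ t _ _ DG Du)].
  unfold minus, plus, opp, scal, mult; simpl; unfold mult; simpl; unfold hfun.
  pose proof (one_plus_sqr_pos (vc t)); field; lra.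
Qed.

End Along_a_solution.

Definition right_continuous_at_0 (f : R -> R) : Prop :=
  filterlim f (at_right 0) (locally (f 0)).

Lemma right_continuous_of_continuous (f : R -> R) :
  continuous f 0 -> right_continuous_at_0 f.
Proof. intros Hf; eapply filterlim_filter_le_1; [apply filter_le_within | exact Hf]. Qed.

Lemma right_continuous_comp (h f : R -> R) :
  continuous h (f 0) -> right_continuous_at_0 f ->
  right_continuous_at_0 (fun s => h (f s)).
Proof. intros Hh Hf; eapply filterlim_comp; [exact Hf | exact Hh]. Qed.

Lemma right_continuous_mult (f g : R -> R) :
  right_continuous_at_0 f -> right_continuous_at_0 g ->
  right_continuous_at_0 (fun s => f s * g s).
Proof.
  intros Hf Hg; exact (filterlim_comp_2 _ _ _ Hf Hg (filterlim_mult (f 0) (g 0))).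
Qed.

Lemma right_continuous_minus (f g : R -> R) :
  right_continuous_at_0 f -> right_continuous_at_0 g ->
  right_continuous_at_0 (fun s => f s - g s).
Proof.
  intros Hf Hg.
  assert (Hopp : filterlim (fun s => - g s) (at_right 0) (locally (- g 0))).
  { eapply filterlim_comp; [exact Hg | exact (filterlim_opp (g 0))]. }
  exact (filterlim_comp_2 _ _ _ Hf Hopp (filterlim_plus (f 0) (- g 0))).
Qed.

Lemma constant_of_derive_0 (f : R -> R) (T : Rbar) :
  (forall t, 0 < t -> Rbar_lt t T -> is_derive f t 0) -> right_continuous_at_0 f ->
  forall t, 0 < t -> Rbar_lt t T -> f t = f 0.
Proof.
  intros Hd Hf t Ht HtT.
  assert (Hnear : at_right 0 (fun s => f t = f s)).
  { exists (mkposreal t Ht); intros s Hs Hs0; change (Rabs (s - 0) < t) in Hs.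
    rewrite Rminus_0_r, Rabs_pos_eq in Hs by lra.
    destruct (MVT_cor2 f (fun _ => 0) s t Hs) as [c [Hc _]]; [|lra].
    intros c Hc; apply is_derive_Reals, Hd; [lra|].
    apply Rbar_le_lt_trans with t; simpl; auto; lra. }
  apply (filterlim_locally_unique (F := at_right 0) f); [|exact Hf].
  exact (filterlim_ext_loc _ _ Hnear (filterlim_const (f t))).
Qed.

Lemma exp_opp_in_unit (t : R) : 0 <= t -> 0 < exp (- t) <= 1.
Proof.
  intros Ht; split; [apply exp_pos|].
  rewrite <- exp_0; destruct Ht as [Ht| <-]; [left; apply exp_increasing; lra|].
  rewrite Ropp_0; lra.
Qed.

Lemma exp_decay_of_derive (f : R -> R) (T : Rbar) :
  (forall t, 0 < t -> Rbar_lt t T -> is_derive f t (- f t)) -> right_continuous_at_0 f ->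
  forall t, 0 < t -> Rbar_lt t T -> f t = f 0 * exp (- t).
Proof.
  intros Hd Hf t Ht HtT.
  assert (Hconst : f t * exp t = f 0 * exp 0).
  { apply (constant_of_derive_0 (fun s => f s * exp s) T); auto.
    - intros s Hs HsT.
      eapply is_derive_value; [|exact (is_derive_mult _ _ s _ _ (Hd s Hs HsT) (is_derive_exp s) Rmult_comm)].
      unfold plus, mult; simpl; ring.
    - apply right_continuous_mult; auto.
      apply right_continuous_of_continuous, continuity_pt_filterlim, derivable_continuous_pt, derivable_pt_exp. }
  rewrite exp_0, Rmult_1_r in Hconst; rewrite <- Hconst, Rmult_assoc, <- exp_plus.
  replace (t + - t) with 0 by ring; rewrite exp_0; ring.
Qed.

Lemma Ffun_le_Gfun_le_Efun (v : R) : 0 < v -> Ffun v <= Gfun v <= Efun v.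
Proof.
  intros Hv; replace (Gfun v) with (level v 0) by (unfold level; lra).
  pose proof (level_sub_Ffun v 0) as HF; pose proof (Efun_sub_level v 0) as HE.
  assert (0 <= level v 0 - Ffun v) by (rewrite HF, div_sqr_nonneg_iff; nra).
  assert (0 <= Efun v - level v 0) by (rewrite HE, div_sqr_nonneg_iff; nra).
  lra.
Qed.

(* [Gfun v] lies between [level v0 p0] and [Gfun v0]: for [u0 >= 0] this gives
   [0 < v <= v0], for [u0 < 0] it gives [v0 <= v]. *)
Lemma Omega_of_level (v0 p0 v p e : R) :
  Omega v0 p0 -> 0 < e <= 1 ->
  p * hfun v = e * (p0 * hfun v0) -> level v p = level v0 p0 -> Omega v p.
Proof.
  intros HO He Hu Hlevel.
  pose proof (level_bounds v0 p0 HO) as HK.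
  apply Omega_iff_level in HO as [Hv0 [HF0 HE0]].
  set (K := level v0 p0) in *; set (u0 := p0 * hfun v0) in *.
  assert (HGv0 : Gfun v0 = K + u0 / 2) by (unfold K, u0, level; ring).
  assert (HGv : Gfun v = K + e * u0 / 2) by (rewrite <- Hu, <- Hlevel; unfold level; ring).
  apply Omega_iff_level; rewrite Hlevel; fold K.
  destruct (Rle_lt_dec 0 u0) as [Hu0|Hu0].
  - assert (Hv : 0 < v) by (apply pos_of_Gfun_pos; nra).
    assert (Hvv0 : v <= v0).
    { rewrite <- (le_iff_of_strict_increasing Gfun Gfun_lt); nra. }
    rewrite <- (le_iff_of_strict_increasing Ffun Ffun_lt) in Hvv0.
    pose proof (Ffun_le_Gfun_le_Efun v Hv); repeat split; auto; nra.
  - assert (Hv0v : v0 <= v).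
    { rewrite <- (le_iff_of_strict_increasing Gfun Gfun_lt); nra. }
    assert (Hv : 0 < v) by lra.
    rewrite <- (le_iff_of_strict_increasing Efun Efun_lt) in Hv0v.
    pose proof (Ffun_le_Gfun_le_Efun v Hv); repeat split; auto; nra.
Qed.



Lemma solution_stays_in_Omega (T : Rbar) (vc p : R -> R) :
  Omega (vc 0) (p 0) -> is_solution_on T vc p ->
  forall t, 0 <= t -> Rbar_lt t T -> Omega (vc t) (p t).
Proof.
  intros HO [Hd [Hv Hp]] t Ht HtT.
  destruct (Req_dec t 0) as [->|Ht0]; auto.
  assert (Hweight : p t * hfun (vc t) = p 0 * hfun (vc 0) * exp (- t)).
  { apply (exp_decay_of_derive (fun s => p s * hfun (vc s)) T); auto; try lra.
    - intros s Hs HsT; apply is_derive_weight; apply Hd; auto.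
    - apply right_continuous_mult; auto.
      apply right_continuous_comp; auto using continuous_hfun. }
  assert (Hlevel : level (vc t) (p t) = level (vc 0) (p 0)).
  { apply (constant_of_derive_0 (fun s => level (vc s) (p s)) T); auto; try lra.
    - intros s Hs HsT; apply is_derive_level; apply Hd; auto.
    - apply right_continuous_minus.
      + apply right_continuous_comp; auto using continuous_Gfun.
      + apply right_continuous_mult; [apply right_continuous_mult|]; auto.
        * apply right_continuous_comp; auto using continuous_hfun.
        * apply right_continuous_of_continuous, continuous_const. }
  apply (Omega_of_level (vc 0) (p 0) _ _ (exp (- t)) HO (exp_opp_in_unit t Ht)); auto.
  rewrite Hweight; ring.
Qed.

Lemma increasing_inverse_on (f f' : R -> R) (a b : R) :
  (forall x, is_derive f x (f' x)) -> (forall x y, x < y -> f x < f y) -> a < b ->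
  exists g : R -> R,
    (forall y, f a <= y <= f b -> a <= g y <= b /\ f (g y) = y) /\
    (forall y, f a < y < f b -> f' (g y) <> 0 -> is_derive g y (/ f' (g y))).
Proof.
  intros Hd Hf Hab.
  assert (Hcont : forall x, continuity_pt f x).
  { intros x; apply derivable_continuous_pt; exists (f' x); apply is_derive_Reals, Hd. }
  assert (Hpre : forall y, {x | f a <= y <= f b -> a <= x <= b /\ f x = y}).
  { intros y; destruct (Rle_dec (f a) y) as [Hay|Hay]; [destruct (Rle_dec y (f b)) as [Hyb|Hyb]|].
    - destruct (f_interv_is_interv f a b y Hab (conj Hay Hyb) (fun x _ => Hcont x)) as [x Hx].
      now exists x.
    - exists a; lra.
    - exists a; lra. }
  set (g := fun y => proj1_sig (Hpre y)).
  assert (Hg : forall y, f a <= y <= f b -> a <= g y <= b /\ f (g y) = y).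
  { intros y; exact (proj2_sig (Hpre y)). }
  exists g; split; auto.
  intros y Hy Hf'.
  assert (Hgf : forall x, a <= x <= b -> g (f x) = x).
  { assert (Hmono : forall x y, x <= y -> f x <= f y).
    { intros x1 x2 [H12| ->]; [apply Rlt_le, Hf|]; lra. }
    intros x Hx; destruct (Hg (f x)) as [_ Hfgx]; [split; apply Hmono; lra|].
    destruct (Rtotal_order (g (f x)) x) as [Hlt|[Heq|Hlt]]; auto; apply Hf in Hlt; lra. }
  assert (Hga : g (f a) = a) by (apply Hgf; lra).
  assert (Hgb : g (f b) = b) by (apply Hgf; lra).
  assert (Hcg : continuity_pt g y).
  { apply (continuity_pt_recip_interv f g a b Hab).
    - intros x1 x2 _ H12 _; now apply Hf.
    - intros x H1 H2; unfold comp, id; apply Hg; lra.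
    - intros x H1 H2; apply Hg; lra.
    - intros x _; apply Hcont.
    - exact Hy. }
  assert (Prf : forall x, g (f a) <= x <= g (f b) -> derivable_pt f x).
  { intros x _; exists (f' x); apply is_derive_Reals, Hd. }
  assert (Hgy : g (f a) <= g y <= g (f b)) by (rewrite Hga, Hgb; apply Hg; lra).
  assert (Hder : derive_pt f (g y) (Prf (g y) Hgy) = f' (g y)).
  { apply derive_pt_eq_0, is_derive_Reals, Hd. }
  apply is_derive_Reals; rewrite <- Hder, <- (Rmult_1_l (/ _)).
  apply (derivable_pt_lim_recip_interv f g (f a) (f b) y Prf Hcg).
  - apply Hf; lra.
  - exact Hy.
  - intros x Hx; unfold comp, id; apply Hg; lra.
  - now rewrite Hder.
Qed.

Lemma Gfun_range (lo hi : R) :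
  0 < lo -> hi < PI / 2 -> exists a, 0 < a < 1 /\ Gfun a < lo /\ hi < Gfun (/ a).
Proof.
  intros Hlo Hhi.
  assert (Heps : 0 < Rmin lo (PI / 2 - hi)) by (apply Rmin_glb_lt; lra).
  destruct (proj1 (filterlim_locally Gfun (Gfun 0)) (continuous_Gfun 0) (mkposreal _ Heps))
    as [d Hd].
  set (a := Rmin (d / 2) (1 / 2)).
  assert (Ha : 0 < a <= 1 / 2 /\ a < d).
  { pose proof (cond_pos d); pose proof (Rmin_l (d / 2) (1 / 2)); pose proof (Rmin_r (d / 2) (1 / 2)).
    assert (0 < a) by (apply Rmin_glb_lt; lra).
    fold a in H0, H1; lra. }
  assert (HGa : Gfun a < Rmin lo (PI / 2 - hi)).
  { assert (Hball : ball 0 d a) by (change (Rabs (a - 0) < d); rewrite Rminus_0_r, Rabs_pos_eq; lra).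
    specialize (Hd a Hball); change (Rabs (Gfun a - Gfun 0) < Rmin lo (PI / 2 - hi)) in Hd.
    rewrite Gfun_0, Rminus_0_r in Hd; pose proof (Rle_abs (Gfun a)); lra. }
  pose proof (Rmin_l lo (PI / 2 - hi)); pose proof (Rmin_r lo (PI / 2 - hi)).
  exists a; rewrite Gfun_inv by lra; repeat split; lra.
Qed.

Section Explicit_solution.

Variables (K u0 : R) (g : R -> R).

Let c (t : R) : R := K + u0 * exp (- t) / 2.
Let vc (t : R) : R := g (c t).
Let p (t : R) : R := u0 * exp (- t) / hfun (vc t).

Hypothesis g_inverse : forall t, 0 <= t ->
  0 < vc t /\ is_derive g (c t) (/ (8 * vc t ^ 2 / (1 + vc t ^ 2) ^ 3)).

Lemma explicit_solution_derive (t : R) : 0 <= t ->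
  is_derive p t (p t * (p t * Rfun (vc t) - 1)) /\
  is_derive vc t (- (p t / 4) * (1 + vc t ^ 2)).
Proof.
  intros Ht; destruct (g_inverse t Ht) as [Hv Dg].
  assert (Dw : is_derive (fun s => u0 * exp (- s)) t (- (u0 * exp (- t)))).
  { auto_derive; [auto | ring]. }
  assert (Dc : is_derive c t (- (u0 * exp (- t)) / 2)).
  { unfold c; auto_derive; [auto | field]. }
  assert (Dv : is_derive vc t (- (p t / 4) * (1 + vc t ^ 2))).
  { eapply is_derive_value; [|exact (is_derive_comp g c t _ _ Dg Dc)].
    unfold scal, mult, p, hfun; simpl; unfold mult; simpl.
    pose proof (one_plus_sqr_pos (vc t)); field; split; lra. }
  split; auto.
  assert (Dh := is_derive_comp hfun vc t _ _ (is_derive_hfun (vc t)) Dv).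
  assert (Hh : hfun (vc t) <> 0).
  { unfold hfun; pose proof (one_plus_sqr_pos (vc t)); apply Rgt_not_eq, Rdiv_lt_0_compat; nra. }
  eapply is_derive_value; [|exact (is_derive_div _ _ t _ _ Dw Dh Hh)].
  unfold scal, mult, p, hfun, Rfun; simpl; unfold mult; simpl.
  pose proof (one_plus_sqr_pos (vc t)); field; repeat split; lra.
Qed.

End Explicit_solution.

Lemma is_solution_on_of_derive (vc p : R -> R) :
  (forall t, 0 <= t ->
     is_derive p t (p t * (p t * Rfun (vc t) - 1)) /\
     is_derive vc t (- (p t / 4) * (1 + vc t ^ 2))) ->
  is_solution_on p_infty vc p.
Proof.
  intros Hd; destruct (Hd 0 (Rle_refl 0)) as [Dp0 Dv0].
  split; [intros t Ht _; apply Hd; lra|].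
  split; apply right_continuous_of_continuous, (ex_derive_continuous (V := R_NormedModule));
    eexists; eassumption.
Qed.

Lemma solution_exists (v0 p0 : R) : Omega v0 p0 ->
  exists vc p : R -> R, vc 0 = v0 /\ p 0 = p0 /\ is_solution_on p_infty vc p.
Proof.
  intros HO.
  set (K := level v0 p0); set (u0 := p0 * hfun v0).
  set (c := fun t => K + u0 * exp (- t) / 2).
  set (lo := Rmin K (Gfun v0)); set (hi := Rmax K (Gfun v0)).
  assert (Hc : forall t, 0 <= t -> lo <= c t <= hi).
  { intros t Ht; pose proof (exp_opp_in_unit t Ht).
    assert (Hc_eq : c t = K + exp (- t) * (Gfun v0 - K)) by (unfold c, K, u0, level; field).
    pose proof (Rmin_l K (Gfun v0)); pose proof (Rmin_r K (Gfun v0));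
    pose proof (Rmax_l K (Gfun v0)); pose proof (Rmax_r K (Gfun v0)).
    unfold lo, hi; rewrite Hc_eq; destruct (Rle_dec K (Gfun v0)); split; nra. }
  assert (Hlo : 0 < lo).
  { apply Rmin_glb_lt; [apply level_bounds | apply Gfun_bounds, HO]; auto. }
  assert (Hhi : hi < PI / 2).
  { apply Rmax_lub_lt; [apply level_bounds | apply Gfun_bounds, HO]; auto. }
  destruct (Gfun_range lo hi Hlo Hhi) as [a [Ha [HGa HGb]]].
  destruct (increasing_inverse_on Gfun (fun v => 8 * v ^ 2 / (1 + v ^ 2) ^ 3) a (/ a)
              is_derive_Gfun Gfun_lt) as [g [Hg Hdg]].
  { apply Rmult_lt_reg_l with a; [lra|]; rewrite Rinv_r; nra. }
  assert (Hgc : forall t, 0 <= t -> 0 < g (c t) /\ Gfun (g (c t)) = c t /\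
             is_derive g (c t) (/ (8 * g (c t) ^ 2 / (1 + g (c t) ^ 2) ^ 3))).
  { intros t Ht; specialize (Hc t Ht).
    destruct (Hg (c t)) as [Hgt HGgt]; [lra|].
    split; [lra | split; [exact HGgt |]].
    apply Hdg; [lra|]; pose proof (one_plus_sqr_pos (g (c t))).
    apply Rgt_not_eq, Rdiv_lt_0_compat; [|apply pow_lt]; nra. }
  exists (fun t => g (c t)), (fun t => u0 * exp (- t) / hfun (g (c t))).
  assert (Hv0 : g (c 0) = v0).
  { apply Gfun_inj; rewrite (proj1 (proj2 (Hgc 0 (Rle_refl 0)))).
    unfold c, K, u0, level; rewrite Ropp_0, exp_0; field. }
  split; [exact Hv0|split].
  - rewrite Hv0, Ropp_0, exp_0; unfold u0.
    assert (0 < hfun v0).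
    { unfold hfun; destruct HO as [Hv0pos _]; pose proof (one_plus_sqr_pos v0).
      apply Rdiv_lt_0_compat; [|apply pow_lt]; nra. }
    field; lra.
  - apply is_solution_on_of_derive, (explicit_solution_derive K u0 g).
    intros t Ht; destruct (Hgc t Ht) as [Hpos [_ Hd]]; auto.
Qed.

Theorem theoremA1 :
  forall v0 p0 : R, Omega v0 p0 ->
    (exists vc p : R -> R,
        vc 0 = v0 /\ p 0 = p0 /\ is_solution_on p_infty vc p /\
        (forall t : R, 0 <= t -> Omega (vc t) (p t))) /\
    (forall (T : Rbar) (vc p : R -> R),
        vc 0 = v0 -> p 0 = p0 -> is_solution_on T vc p ->
        forall t : R, 0 <= t -> Rbar_lt t T -> Omega (vc t) (p t)).
Proof.
  intros v0 p0 HO; split.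
  - destruct (solution_exists v0 p0 HO) as [vc [p [Hv0 [Hp0 Hsol]]]].
    exists vc, p; refine (conj Hv0 (conj Hp0 (conj Hsol _))).
    intros t Ht; apply (solution_stays_in_Omega p_infty vc p); [congruence | auto | auto | exact I].
  - intros T vc p Hv0 Hp0 Hsol.
    apply solution_stays_in_Omega; [congruence | auto].
Qed.
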